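(* Let $Y(0),Y(1)$ be integrable real-valued potential outcomes and $X$ a random vector in $\mathbb{R}^{d_X}$, $d_X\geq 3$, with support $\mathcal{X}$, written (after reordering coordinates) as $X=(X^{(1)},X^{(2)})$ where $X^{(1)}$ consists of exactly two components and $X^{(2)}$ of the remaining ones; for $x\in\mathcal{X}$ write $x=(x^{(1)},x^{(2)})$ correspondingly. Suppose: (Deterministic treatment) $\mathcal{X}=\mathcal{X}_0\cup\mathcal{X}_1$ with $\mathcal{X}_0\cap\mathcal{X}_1=\emptyset$, $D=1\{X\in\mathcal{X}_1\}$ and $Y=DY(1)+(1-D)Y(0)$; (Continuity) $x\mapsto E[Y(0)|X=x]$ and $x\mapsto E[Y(1)|X=x]$ are continuous on $\mathcal{X}$; (Conditional comonotonicity) for all $x_1,x_2\in\mathcal{X}$ with $x_1^{(2)}=x_2^{(2)}$, $$E[Y(1)|X=x_1]\geq E[Y(1)|X=x_2]\iff E[Y(0)|X=x_1]\geq E[Y(0)|X=x_2].$$ Let $\mathcal{F}=\mathrm{cl}(\mathrm{int}(\mathcal{X}_1))\cap\mathrm{cl}(\mathrm{int}(\mathcal{X}_0))$ and for $d\in\{0,1\}$ let $g_d$ be a function on $\mathcal{X}_d\cup\mathcal{F}$ with $g_d(x)=E[Y|X=x]$ for $x\in\mathcal{X}_d$ and $g_d$ continuous at each point of $\mathcal{F}$. Then: (i) if $d\in\{0,1\}$, $x\in\mathcal{X}_d$ and there exists $x^*\in\mathcal{F}$ with $x^{*(2)}=x^{(2)}$ and $E[Y|X=x]=g_d(x^* )$,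 then $E[Y(1)|X=x]=g_1(x^* )$ and $E[Y(0)|X=x]=g_0(x^* )$; (ii) for any $x_1,x_2\in\mathcal{F}$ with $x_1^{(2)}=x_2^{(2)}$, $g_0(x_1)\geq g_0(x_2)\iff g_1(x_1)\geq g_1(x_2)$.
   Context: Conditional expectation functions $x\mapsto E[Y(d)|X=x]$ are understood as the unique continuous versions. For $x\in\mathcal{X}_d$, $E[Y|X=x]$ is understood as $E[Y(d)|X=x]$. $\mathrm{int}$ and $\mathrm{cl}$ denote interior and closure in $\mathbb{R}^{d_X}$. *)

From HB Require Import structures.
From mathcomp Require Import all_boot all_order all_algebra.
From mathcomp Require Import all_classical all_reals all_analysis.
Set Implicit Arguments. Unset Strict Implicit. Unset Printing Implicit Defensive.
Import Order.TTheory GRing.Theory Num.Theory.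
Import numFieldNormedType.Exports.
Local Open Scope classical_set_scope.
Local Open Scope ring_scope.

(* Points of R^{d_X} are row vectors 'rV[R]_dX (Euclidean topology via the
   max norm, which induces the usual topology). *)

Definition supp {d} {T : measurableType d} {R : realType} {n : nat}
  (P : probability T R) (X : T -> 'rV[R]_n) : set 'rV[R]_n :=
  [set x | forall r : R, 0 < r -> (0 < P (X @^-1` ball x r))%E].

(* m is a version of x |-> E[Y | X = x]: m(X) is integrable and
   E[Y 1{X in B}] = E[m(X) 1{X in B}] for every open B (open sets form a
   pi-system generating the Borel sets, so this characterizes the
   conditional expectation). *)
Definition cexp_version {d} {T : measurableType d} {R : realType} {n : nat}
  (P : probability T R) (X : T -> 'rV[R]_n) (Y : T -> R) (m : 'rV[R]_n -> R)
  : Prop :=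
  P.-integrable setT (EFin \o (m \o X)) /\
  forall B : set 'rV[R]_n, open B ->
    (\int[P]_(w in X @^-1` B) (Y w)%:E = \int[P]_(w in X @^-1` B) (m (X w))%:E)%E.

(* x^(2) = y^(2): agreement on the coordinates outside S, where S is the
   index set of the two components forming X^(1). *)
Definition same2 {R : realType} {n : nat} (S : {set 'I_n}) (x y : 'rV[R]_n)
  : Prop := forall i : 'I_n, i \notin S -> x ord0 i = y ord0 i.

(* Every point of F is a limit of interior points of X_d, where g_d equals
   E[Y(d)|X = .]; as F lies in the support, which is closed and on which that
   CEF is continuous, g_d = E[Y(d)|X = .] on F for both d.  Both claims then
   reduce to conditional comonotonicity, applied in both directions to get
   equalities in (i). *)
From HB Require Import structures.
From mathcomp Require Import all_boot all_order all_algebra.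
From mathcomp Require Import all_classical all_reals all_analysis.
From mathcomp Require Import measurable_realfun.
Import Order.TTheory GRing.Theory Num.Theory.
Import numFieldNormedType.Exports.
Local Open Scope classical_set_scope.
Local Open Scope ring_scope.

Lemma eq_iff_of_le_iff {R : numDomainType} {a1 a2 b1 b2 : R} :
  (a2 <= a1 <-> b2 <= b1) -> (a1 <= a2 <-> b1 <= b2) ->
  a1 = a2 <-> b1 = b2.
Proof.
move=> le21 le12; split => [a12|b12]; apply/eqP; rewrite eq_le.
- by rewrite (proj1 le12) ?a12 // (proj1 le21) ?a12.
- by rewrite (proj2 le12) ?b12 // (proj2 le21) ?b12.
Qed.

Lemma same2_sym {R : realType} {n} {S : {set 'I_n}} {x y : 'rV[R]_n} :
  same2 S x y -> same2 S y x.
Proof. by move=> sxy i iS; rewrite sxy. Qed.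

Lemma measurable_preimage_ball {R : realType} {dm} {T : measurableType dm}
    {m n : nat} {X : T -> 'M[R]_(m, n)} (x : 'M[R]_(m, n)) (r : R) :
  (forall i j, measurable_fun setT (fun w => X w i j)) ->
  0 < r -> measurable (X @^-1` ball x r).
Proof.
move=> mX r0.
have -> : X @^-1` ball x r = \bigcap_(ij in [set: 'I_m * 'I_n])
    ((fun w => X w ij.1 ij.2) @^-1` ball (x ij.1 ij.2) r).
  apply/seteqP; split => [w [_ bxw] [i j] _ | w bxw] //=.
  by split => // i j; exact: (bxw (i, j)).
apply: fin_bigcap_measurable; first exact: finite_finset.
move=> [i j] _; rewrite -[_ @^-1` _]setTI.
apply: (mX i j) => //; apply: open_measurable; exact: ball_open.
Qed.

Lemma closed_supp {R : realType} {dm} {T : measurableType dm}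
    (P : probability T R) {n : nat} {X : T -> 'rV[R]_n} :
  (forall i j, measurable_fun setT (fun w => X w i j)) ->
  closed (supp P X).
Proof.
move=> mX x clx r r0.
have r20 : 0 < r / 2 by rewrite divr_gt0.
have [y [sy bxy]] := clx _ (nbhsx_ballx x _ r20).
apply: lt_le_trans (sy _ r20) _.
apply: le_measure; rewrite ?inE; try exact: measurable_preimage_ball.
by move=> w /= byw; rewrite [r](splitr r); exact: ball_triangle bxy byw.
Qed.

Lemma eq_at_closure_interior {T : topologicalType} {U : topologicalType}
    {A B C : set T} {f g : T -> U} {x : T} :
  hausdorff_space U ->
  {within A, continuous f} -> A x -> B `<=` A -> B `<=` C ->
  (forall y, B y -> g y = f y) ->
  g @ within C (nbhs x) --> g x ->
  closure (interior B) x -> g x = f x.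
Proof.
move=> hU fA Ax BA BC gf gC clx.
pose G := within (interior B) (nbhs x).
have PG : ProperFilter G by exact: within_nbhs_proper.
have IB : interior B `<=` B := @interior_subset _ B.
have gG : g @ G --> g x.
  by move=> V /gC; apply: within_subset => y /IB /BC.
have fG : f @ G --> f x.
  move=> V /((subspace_continuousP A f).1 fA x Ax).
  by apply: within_subset => y /IB /BA.
apply: (cvg_unique hU gG); apply: cvg_trans fG.
apply: (@near_eq_cvg _ _ G PG); rewrite /G /within /=.
apply: (@filterS _ (nbhs x) _ setT); last exact: filterT.
by move=> y _ /IB /gf.
Qed.

Theorem theorem3 (R : realType) (dm : measure_display) (T : measurableType dm)
  (P : probability T R) (dX : nat) (S : {set 'I_dX})
  (X : T -> 'rV[R]_dX) (Ypot : bool -> T -> R) (Y : T -> R)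
  (m : bool -> 'rV[R]_dX -> R) (Xs : bool -> set 'rV[R]_dX)
  (g : bool -> 'rV[R]_dX -> R) :
  (3 <= dX)%N ->
  #|S| = 2%N ->
  (forall i : 'I_dX, measurable_fun setT (fun w => X w ord0 i)) ->
  (forall b, measurable_fun setT (Ypot b)) ->
  (forall b, P.-integrable setT (EFin \o Ypot b)) ->
  (forall b, cexp_version P X (Ypot b) (m b)) ->
  (* deterministic treatment *)
  supp P X = Xs false `|` Xs true ->
  Xs false `&` Xs true = set0 ->
  (forall w, Y w = (if X w \in Xs true then Ypot true w else Ypot false w)) ->
  (* continuity *)
  (forall b, {within supp P X, continuous m b}) ->
  (* conditional comonotonicity *)
  (forall x1 x2, supp P X x1 -> supp P X x2 -> same2 S x1 x2 ->
     (m true x2 <= m true x1 <-> m false x2 <= m false x1)) ->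
  let F := closure (interior (Xs true)) `&` closure (interior (Xs false)) in
  (* g_d: equals E[Y|X=x] = E[Y(d)|X=x] on X_d, continuous at points of F
     as a function on X_d u F *)
  (forall b x, Xs b x -> g b x = m b x) ->
  (forall b x, F x -> g b @ within (Xs b `|` F) (nbhs x) --> g b x) ->
  (forall (b : bool) x xs, Xs b x -> F xs -> same2 S xs x ->
     m b x = g b xs -> m true x = g true xs /\ m false x = g false xs) /\
  (forall x1 x2, F x1 -> F x2 -> same2 S x1 x2 ->
     (g false x2 <= g false x1 <-> g true x2 <= g true x1)).
Proof.
move=> _ _ mX _ _ _ suppE _ _ mcont comon F gm gcont.
have mXij i j : measurable_fun setT (fun w => X w i j) by rewrite (ord1 i).
have XsS b : Xs b `<=` supp P X.
  by move=> x Xx; rewrite suppE; case: b Xx; [right | left].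
have clF b xs : F xs -> closure (interior (Xs b)) xs by case: b => -[].
have suppF xs : F xs -> supp P X xs.
  move=> /(clF true) /(closureS (subset_trans (@interior_subset _ _) (XsS _))).
  exact: (closed_supp P mXij).
have gF b xs : F xs -> g b xs = m b xs.
  move=> Fxs.
  apply: (eq_at_closure_interior (B := Xs b) (C := Xs b `|` F) _ (mcont b)).
  - exact: Rhausdorff.
  - exact: suppF.
  - exact: XsS.
  - exact: subsetUl.
  - exact: gm.
  - exact: gcont.
  - exact: clF.
split.
  move=> b x xs Xx Fxs sxs; rewrite !gF //.
  have tf : m true x = m true xs <-> m false x = m false xs := eq_iff_of_le_iff
    (comon _ _ (XsS b x Xx) (suppF _ Fxs) (same2_sym sxs))
    (comon _ _ (suppF _ Fxs) (XsS b x Xx) sxs).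
  by case: b {Xx} => eqxs; split => //; apply/tf.
move=> x1 x2 F1 F2 s12; rewrite !gF //.
by apply: iff_sym; apply: comon => //; apply: suppF.
Qed.
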